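(* In the fixed-volume $\alpha$-cap process described in the context (with $|A_0|=\alpha$), there is $R>0$ such that $A_1\subseteq B(0,R)$.
   Context: $B(0,R)$ is the open Euclidean ball, $|\cdot|$ Lebesgue measure. Kernel assumptions: $g:\mathbb{R}^d\to[0,1]$, $g(x)=\tilde g(\|x\|)$; $g(0)=1$, $g>0$; $g$ is $L$-Lipschitz with continuous first and second derivatives; $\tilde g'(r)<0$ for $r>0$. Fixed-volume $\alpha$-cap process: $A_0\subset\mathbb{R}^d$ compact with $|A_0|=\alpha>0$; for $t\ge1$, $f_t(x)=\int\mathbbm{1}_{A_{t-1}}(y)g(x-y)\,dy$, $C_t=\inf\{C\ge0:|\{x:f_t(x)\ge C\}|<\alpha\}$, $A_t=\{x:f_t(x)\ge C_t\}$. *)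

From HB Require Import structures.
From mathcomp Require Import all_boot all_order all_algebra.
From mathcomp Require Import all_classical all_reals all_analysis.
Set Implicit Arguments. Unset Strict Implicit. Unset Printing Implicit Defensive.
Import Order.TTheory GRing.Theory Num.Theory.
Import numFieldNormedType.Exports.
Local Open Scope classical_set_scope.
Local Open Scope ring_scope.

Definition eucl_norm (R : realType) (d : nat) (x : 'rV[R]_d) : R :=
  Num.sqrt (\sum_(i < d) x ord0 i ^+ 2).

Definition eball0 (R : realType) (d : nat) (r : R) : set 'rV[R]_d :=
  [set x | eucl_norm x < r].

Definition box (R : realType) (d : nat) (a b : 'rV[R]_d) : set 'rV[R]_d :=
  [set x | forall i : 'I_d, a ord0 i <= x ord0 i < b ord0 i].

Definition boxes (R : realType) (d : nat) : set (set 'rV[R]_d) :=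
  [set B | exists a b, B = box a b].

(* R^d with its Borel sigma-algebra (generated by half-open boxes) *)
Definition Rd (R : realType) (d : nat) := g_sigma_algebraType (@boxes R d).

(* A measure on the Borel sets of R^d is Lebesgue measure iff it gives every
   box its volume (uniqueness of the extension from the semiring of boxes). *)
Definition is_lebesgue (R : realType) (d : nat)
    (mu : {measure set (Rd R d) -> \bar R}) : Prop :=
  forall a b : 'rV[R]_d, (forall i, a ord0 i <= b ord0 i) ->
    mu (box a b) = (\prod_(i < d) (b ord0 i - a ord0 i))%:E.

Definition evec {R : realType} {d : nat} (i : 'I_d) : 'rV[R]_d :=
  delta_mx ord0 i.

Definition kernel_assumptions (R : realType) (d : nat)
    (g : 'rV[R]_d -> R) : Prop :=
  (forall x, 0 <= g x <= 1) /\
  (exists gt : R -> R,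
      (forall x, g x = gt (eucl_norm x)) /\
      (forall r, 0 < r -> derivable gt r 1 /\ derive1 gt r < 0)) /\
  g 0 = 1 /\
  (forall x, 0 < g x) /\
  (exists L : R, 0 <= L /\
     forall x y, `|g x - g y| <= L * eucl_norm (x - y)) /\
  (forall (i : 'I_d) x, derivable g x (evec i)) /\
  (forall i : 'I_d, continuous (fun x => derive g x (evec i))) /\
  (forall (i j : 'I_d) x, derivable (fun y => derive g y (evec i)) x (evec j)) /\
  (forall i j : 'I_d, continuous
     (fun x => derive (fun y => derive g y (evec i)) x (evec j))).

Section CapStep.
Context (R : realType) (d : nat) (mu : {measure set (Rd R d) -> \bar R})
        (g : 'rV[R]_d -> R) (alpha : R).

Definition cap_f (A : set 'rV[R]_d) (x : 'rV[R]_d) : \bar R :=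
  (\int[mu]_(y in [set: Rd R d]) ((\1_A y) * g (x - (y : 'rV[R]_d)))%:E)%E.

Definition cap_C (A : set 'rV[R]_d) : R :=
  inf [set C : R | 0 <= C /\
        (mu [set x : Rd R d | (C%:E <= cap_f A x)%E] < alpha%:E)%E].

Definition cap_next (A : set 'rV[R]_d) : set 'rV[R]_d :=
  [set x | ((cap_C A)%:E <= cap_f A x)%E].

End CapStep.

(* A_0 is compact, so |y|_oo <= r on A_0.  Every point of the cube
   Q = [0, alpha + 1)^d is within Euclidean distance rho = d (alpha + 1 + r) of
   every point of A_0, hence f_1 >= g~(rho) alpha on Q.  As f_1 is Lipschitz its
   superlevel sets are Borel, and since |Q| >= alpha no level below
   g~(rho) alpha has a superlevel set of measure < alpha: C_1 >= g~(rho) alpha.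
   Outside the ball of radius d (rho + 1 + r) every point is at distance
   >= rho + 1 from A_0, so there f_1 <= g~(rho + 1) alpha < C_1 because g~ is
   strictly decreasing. *)

From HB Require Import structures.
From mathcomp Require Import all_boot all_order all_algebra.
From mathcomp Require Import all_classical all_reals all_analysis.
From mathcomp Require Import measurable_realfun lra.
Import Order.TTheory GRing.Theory Num.Theory.
Import numFieldNormedType.Exports.
Local Open Scope classical_set_scope.
Local Open Scope ring_scope.
Set Implicit Arguments. Unset Strict Implicit. Unset Printing Implicit Defensive.

Section eucl_norm.
Variables (R : realType) (d : nat).
Implicit Types x y : 'rV[R]_d.

Lemma eucl_norm_ge0 x : 0 <= eucl_norm x.
Proof. exact: sqrtr_ge0. Qed.

Lemma eucl_norm0 : eucl_norm (0 : 'rV[R]_d) = 0.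
Proof. by rewrite /eucl_norm big1 ?sqrtr0 // => i _; rewrite mxE expr0n. Qed.

Lemma eucl_normN x : eucl_norm (- x) = eucl_norm x.
Proof. by rewrite /eucl_norm; under eq_bigr do rewrite mxE sqrrN. Qed.

Lemma eucl_distC x y : eucl_norm (x - y) = eucl_norm (y - x).
Proof. by rewrite -opprB eucl_normN. Qed.

Lemma coord_le_eucl_norm x i : `|x ord0 i| <= eucl_norm x.
Proof.
rewrite /eucl_norm -sqrtr_sqr ler_sqrt ?sumr_ge0 // => [|j _]; last exact: sqr_ge0.
by rewrite (bigD1 i) //= lerDl sumr_ge0 // => j _; exact: sqr_ge0.
Qed.

Lemma eucl_norm_le_coord_bound x M :
  0 <= M -> (forall i, `|x ord0 i| <= M) -> eucl_norm x <= d%:R * M.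
Proof.
move=> M0 xM; rewrite /eucl_norm -(@ger0_norm _ (d%:R * M)) ?mulr_ge0 //.
rewrite -sqrtr_sqr ler_sqrt ?sqr_ge0 //.
apply: (@le_trans _ _ (\sum_(i < d) M ^+ 2)).
  apply: ler_sum => i _; rewrite -real_normK ?num_real //.
  by rewrite lerXn2r ?nnegrE ?normr_ge0.
rewrite sumr_const card_ord exprMn -[M ^+ 2 *+ d]mulr_natl ler_wpM2r ?sqr_ge0 //.
by rewrite -natrX ler_nat; case: (d) => // n; rewrite expnS leq_pmulr.
Qed.

Lemma coord_le_mx_norm x i : `|x ord0 i| <= `|x|.
Proof. by change `|x| with (mx_norm x); rewrite mx_normrE (le_bigmax _ _ (ord0, i)). Qed.

Lemma mx_norm_le_eucl_norm x : `|x| <= eucl_norm x.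
Proof.
change `|x| with (mx_norm x); rewrite mx_normrE; apply: bigmax_le => [|[i j] _].
  exact: eucl_norm_ge0.
by rewrite [i]ord1; exact: coord_le_eucl_norm.
Qed.

Lemma eucl_norm_le_mx_norm x : eucl_norm x <= d%:R * `|x|.
Proof. exact: eucl_norm_le_coord_bound (coord_le_mx_norm x). Qed.

Lemma eucl_norm_onto t : (0 < d)%N -> 0 <= t -> exists x, eucl_norm x = t.
Proof.
move=> d_gt0 t_ge0; pose i0 := Ordinal d_gt0.
exists (t *: evec i0); rewrite /eucl_norm (bigD1 i0) //= big1 => [|j /negbTE ji0].
  by rewrite !mxE eqxx mulr1 addr0 sqrtr_sqr ger0_norm.
by rewrite !mxE ji0 mulr0 expr0n.
Qed.

End eucl_norm.

Section rV_Borel.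
Variables (R : realType) (d : nat).

Lemma rat_box_in_ball (x : 'rV[R]_d) (e : R) : 0 < e ->
  exists a b : 'rV[rat]_d, box (map_mx ratr a) (map_mx ratr b) x /\
    box (map_mx ratr a) (map_mx ratr b) `<=` ball x e.
Proof.
move=> e_gt0.
have rat_around i : exists ab : rat * rat,
    x ord0 i - e < ratr ab.1 < x ord0 i /\ x ord0 i < ratr ab.2 < x ord0 i + e.
  have [q1] : exists q, ratr q \in `](x ord0 i - e), (x ord0 i)[.
    by apply: rat_in_itvoo; rewrite gtrBl.
  have [q2] : exists q, ratr q \in `](x ord0 i), (x ord0 i + e)[.
    by apply: rat_in_itvoo; rewrite ltrDl.
  by rewrite !in_itv /= => ? ?; exists (q1, q2).
have [ab abP] := choice rat_around.
exists (\row_i (ab i).1), (\row_i (ab i).2); split => [i|y yab].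
  by rewrite !mxE; have [/andP[_ /ltW ->] /andP[-> _]] := abP i.
split => // i j; rewrite [i]ord1 /ball /=.
have := yab j; rewrite !mxE => /andP[].
have [/andP[? ?] /andP[? ?]] := abP j.
by move=> ? ?; rewrite ltr_norml; apply/andP; split; lra.
Qed.

(* An open set is the union of the rational boxes it contains. *)
Lemma open_measurable_rV (U : set 'rV[R]_d) : open U -> @measurable _ (Rd R d) U.
Proof.
move=> oU.
pose B (ab : 'rV[rat]_d * 'rV[rat]_d) : set (Rd R d) :=
  box (map_mx ratr ab.1) (map_mx ratr ab.2).
pose F ab := if pselect (B ab `<=` U) then B ab else set0.
have -> : U = \bigcup_ab F ab.
  apply/seteqP; split => [x Ux|x [ab _]]; last first.
    by rewrite /F; case: pselect => // BU /BU.
  move: oU; rewrite openE => /(_ x Ux) /nbhs_ballP [e e_gt0 xeU].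
  have [a [b [xab abe]]] := rat_box_in_ball x e_gt0.
  exists (a, b) => //; rewrite /F; case: pselect => //= -[].
  by move=> y /abe /xeU.
have mF ab : measurable (F ab).
  rewrite /F; case: pselect => ?; last exact: measurable0.
  by apply: sub_sigma_algebra; do 2 eexists.
exact: countable_bigcupT_measurable (countableP _) mF.
Qed.

Lemma closed_measurable_rV (V : set 'rV[R]_d) : closed V -> @measurable _ (Rd R d) V.
Proof.
move=> cV; rewrite -(setCK V); apply: measurableC.
by apply: open_measurable_rV; exact: closed_openC.
Qed.

Lemma continuous_measurable_fun_rV (f : 'rV[R]_d -> R) :
  continuous f -> measurable_fun [set: Rd R d] f.
Proof.
move=> f_cont; apply: (measurability _ (RGenOInfty.measurableE R)).
move=> _ [_ [c ->] <-]; rewrite setTI; apply: open_measurable_rV.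
rewrite (_ : _ @^-1` _ = f @^-1` [set t | c < t]).
  by apply: open_comp => [x _|]; [exact: f_cont | exact: open_gt].
by apply/seteqP; split => x /=; rewrite in_itv /= andbT.
Qed.

End rV_Borel.

Lemma lipschitz_continuous (R : realType) (V : normedModType R) (f : V -> R) (k : R) :
  (forall x y, `|f x - f y| <= k * `|x - y|) -> continuous f.
Proof.
move=> f_lip x; apply/cvgrPdist_lt => e e_gt0.
have k1_gt0 : 0 < `|k| + 1 by rewrite ltr_wpDl.
near=> y; apply: (le_lt_trans (f_lip x y)).
apply: (@le_lt_trans _ _ ((`|k| + 1) * `|x - y|)).
  by rewrite ler_wpM2r // (le_trans (ler_norm k)) // lerDl.
rewrite -ltr_pdivlMl //; near: y.
by apply: (@cvgr_dist_lt _ _ _ _ _ id); [exact: cvg_id | rewrite mulr_gt0 ?invr_gt0].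
Unshelve. all: by end_near.
Qed.

Lemma eucl_lipschitz_continuous (R : realType) (d : nat) (f : 'rV[R]_d -> R) (k : R) :
  0 <= k -> (forall x y, `|f x - f y| <= k * eucl_norm (x - y)) -> continuous f.
Proof.
move=> k_ge0 f_lip; apply: (@lipschitz_continuous _ _ _ (k * d%:R)) => x y.
by rewrite -mulrA (le_trans (f_lip x y)) // ler_wpM2l // eucl_norm_le_mx_norm.
Qed.

Lemma ltr0_derive1_lt_oy (R : realType) (h : R -> R) :
  (forall t, 0 < t -> derivable h t 1 /\ derive1 h t < 0) ->
  {in `]0, +oo[ &, {homo h : x y /~ x < y}}.
Proof.
move=> h_der b a; rewrite !in_itv /= !andbT => _ a_gt0 ab.
have pos x : x \in `[a, b] -> 0 < x.
  by rewrite in_itv => /andP[ax _]; exact: lt_le_trans ax.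
apply: (@ltr0_derive1_lt_cc _ h a b) => //.
- by move=> x /subset_itv_oo_cc /pos /h_der[].
- by move=> x /subset_itv_oo_cc /pos /h_der[].
- by apply: derivable_within_continuous => x /pos /h_der[].
- by rewrite in_itv /= lexx (ltW ab).
- by rewrite in_itv /= lexx (ltW ab).
Qed.

Section radial_profile.
Variables (R : realType) (d : nat) (g : 'rV[R]_d -> R) (gt : R -> R).
Hypothesis d_gt0 : (0 < d)%N.
Hypothesis g01 : forall x, 0 <= g x <= 1.
Hypothesis g0 : g 0 = 1.
Hypothesis g_radial : forall x, g x = gt (eucl_norm x).
Hypothesis gt_derive : forall r, 0 < r -> derivable gt r 1 /\ derive1 gt r < 0.

Lemma radial_profile_ge0 t : 0 <= t -> 0 <= gt t.
Proof.
move=> t_ge0; have [v <-] := eucl_norm_onto d_gt0 t_ge0.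
by rewrite -g_radial; case/andP: (g01 v).
Qed.

Lemma radial_profile_le a b : 0 <= a -> a <= b -> gt b <= gt a.
Proof.
rewrite le_eqVlt => /predU1P[<- b_ge0|a_gt0 ab].
  have [v <-] := eucl_norm_onto d_gt0 b_ge0.
  by rewrite -g_radial -(eucl_norm0 R d) -g_radial g0; case/andP: (g01 v).
rewrite le_eqVlt in ab; case/predU1P: ab => [-> //|ab].
by apply/ltW/(ltr0_derive1_lt_oy gt_derive); rewrite // in_itv /= andbT // (lt_trans a_gt0).
Qed.

End radial_profile.

Section cap_integral.
Variables (R : realType) (d : nat) (mu : {measure set (Rd R d) -> \bar R}).
Variables (g : 'rV[R]_d -> R) (alpha L : R) (A : set 'rV[R]_d).
Hypothesis mA : @measurable _ (Rd R d) A.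
Hypothesis muA : mu A = alpha%:E.
Hypothesis g01 : forall x, 0 <= g x <= 1.
Hypothesis L_ge0 : 0 <= L.
Hypothesis g_lip : forall x y, `|g x - g y| <= L * eucl_norm (x - y).

Local Notation f := (cap_f mu g A).

Let measurable_fun_indic_mul (h : 'rV[R]_d -> R) :
  continuous h -> measurable_fun [set: Rd R d] (fun y => ((\1_A y) * h y)%:E).
Proof.
move=> h_cont; apply/measurable_EFinP; apply: measurable_funM.
  exact: measurable_indic.
exact: continuous_measurable_fun_rV.
Qed.

Let indic_mul_ge0 (h : 'rV[R]_d -> R) :
  (forall y, 0 <= h y) -> forall y, [set: Rd R d] y -> (0 <= ((\1_A y) * h y)%:E)%E.
Proof. by move=> h_ge0 y _; rewrite lee_fin mulr_ge0 // /indic ler0n. Qed.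

Let g_shift_continuous (x : 'rV[R]_d) : continuous (fun y : 'rV[R]_d => g (x - y)).
Proof.
apply: (eucl_lipschitz_continuous L_ge0) => y y'.
by rewrite (le_trans (g_lip _ _)) // opprB addrC addrA subrK eucl_distC.
Qed.

Lemma integral_indic_cst c : 0 <= c ->
  (\int[mu]_(y in [set: Rd R d]) ((\1_A y) * c)%:E = (c * alpha)%:E)%E.
Proof.
move=> c_ge0; under eq_integral do rewrite mulrC EFinM.
rewrite ge0_integralZl_EFin //.
- by rewrite integral_indic // setIT muA -EFinM.
- by apply/measurable_EFinP; exact: measurable_indic.
Qed.

Lemma cap_f_ge_cst x c : 0 <= c -> (forall y, A y -> c <= g (x - y)) ->
  ((c * alpha)%:E <= f x)%E.
Proof.
move=> c_ge0 cg; rewrite -integral_indic_cst //.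
apply: ge0_le_integral => //.
- by apply: indic_mul_ge0.
- exact: measurable_fun_indic_mul (@cst_continuous 'rV[R]_d _ c).
- exact: measurable_fun_indic_mul (@g_shift_continuous x).
- move=> y _; rewrite lee_fin /indic; case: (boolP (y \in A)) => yA.
    by rewrite !mul1r cg // -inE.
  by rewrite !mul0r.
Qed.

Lemma cap_f_le_cst x c : 0 <= c -> (forall y, A y -> g (x - y) <= c) ->
  (f x <= (c * alpha)%:E)%E.
Proof.
move=> c_ge0 gc; rewrite -integral_indic_cst //.
apply: ge0_le_integral => //.
- by apply: indic_mul_ge0 => y; case/andP: (g01 (x - y)).
- exact: measurable_fun_indic_mul (@g_shift_continuous x).
- exact: measurable_fun_indic_mul (@cst_continuous 'rV[R]_d _ c).
- move=> y _; rewrite lee_fin /indic; case: (boolP (y \in A)) => yA.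
    by rewrite !mul1r gc // -inE.
  by rewrite !mul0r.
Qed.

Lemma cap_f_fin_num x : f x \is a fin_num.
Proof.
rewrite ge0_fin_numE; last first.
  by apply: integral_ge0 => y _; rewrite lee_fin mulr_ge0 //; case/andP: (g01 (x - y)).
rewrite (le_lt_trans (@cap_f_le_cst x 1 _ _)) ?ltry // => y _.
by case/andP: (g01 (x - y)).
Qed.

Let cap_f_le_shift x x' :
  (f x <= f x' + (L * eucl_norm (x - x') * alpha)%:E)%E.
Proof.
have c_ge0 : 0 <= L * eucl_norm (x - x') by rewrite mulr_ge0 // eucl_norm_ge0.
rewrite -integral_indic_cst // -ge0_integralD //.
- apply: ge0_le_integral => //.
  + by apply: indic_mul_ge0 => y; case/andP: (g01 (x - y)).
  + exact: measurable_fun_indic_mul (@g_shift_continuous x).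
  + apply: emeasurable_funD.
      exact: measurable_fun_indic_mul (@g_shift_continuous x').
    exact: measurable_fun_indic_mul (@cst_continuous 'rV[R]_d _ _).
  + move=> y _; rewrite -EFinD lee_fin /indic; case: (boolP (y \in A)) => yA.
      rewrite !mul1r -lerBlDl (le_trans (ler_norm _)) // (le_trans (g_lip _ _)) //.
      by rewrite opprB addrA subrK.
    by rewrite !mul0r addr0.
- by apply: indic_mul_ge0 => y; case/andP: (g01 (x' - y)).
- exact: measurable_fun_indic_mul (@g_shift_continuous x').
- exact: indic_mul_ge0.
- exact: measurable_fun_indic_mul (@cst_continuous 'rV[R]_d _ _).
Qed.

Lemma cap_f_lipschitz x x' :
  `|fine (f x) - fine (f x')| <= L * alpha * eucl_norm (x - x').
Proof.
have fE z : f z = (fine (f z))%:E by rewrite fineK // cap_f_fin_num.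
have := cap_f_le_shift x x'; have := cap_f_le_shift x' x.
rewrite (eucl_distC x') (fE x) (fE x') -!EFinD !lee_fin ler_norml.
by move=> ? ?; apply/andP; split; lra.
Qed.

Lemma measurable_cap_level C : @measurable _ (Rd R d) [set x | (C%:E <= f x)%E].
Proof.
have alpha_ge0 : 0 <= alpha by rewrite -lee_fin -muA measure_ge0.
have -> : [set x | (C%:E <= f x)%E] = (fun x => fine (f x)) @^-1` [set t | C <= t].
  by apply/seteqP; split => x /=; rewrite -lee_fin fineK // cap_f_fin_num.
have f_cont : continuous (fun x => fine (f x)).
  by apply: eucl_lipschitz_continuous cap_f_lipschitz; rewrite mulr_ge0.
apply: closed_measurable_rV; apply: preimage_closed => [x _|]; last exact: closed_ge.
exact: f_cont.
Qed.

Lemma cap_C_ge (Q : set 'rV[R]_d) c : 0 < alpha ->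
  @measurable _ (Rd R d) Q -> (alpha%:E <= mu Q)%E ->
  (forall x, Q x -> (c%:E <= f x)%E) -> c <= cap_C mu g alpha A.
Proof.
move=> alpha_gt0 mQ muQ Qc; apply: lb_le_inf.
  exists (alpha + 1); split; first lra.
  rewrite (_ : [set x | _] = set0) ?measure0 ?lte_fin //.
  apply/seteqP; split => // x /=; apply/negP; rewrite -ltNge.
  apply: (@le_lt_trans _ _ ((1 * alpha)%:E)); last by rewrite lte_fin; lra.
  by apply: cap_f_le_cst => // y _; case/andP: (g01 (x - y)).
move=> C [_ level_small]; rewrite leNgt; apply/negP => Cc.
have : (mu Q <= mu [set x | (C%:E <= f x)%E])%E.
  apply: le_measure; rewrite ?inE //; first exact: measurable_cap_level.
  by move=> x /Qc; apply: le_trans; rewrite lee_fin ltW.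
by move/(le_trans muQ); rewrite leNgt level_small.
Qed.

End cap_integral.

Lemma compact_norm_bounded (R : realType) (V : normedModType R) (A : set V) :
  compact A -> exists2 r, 0 <= r & forall y, A y -> `|y| <= r.
Proof.
move=> /compact_bounded [M [_ AM]]; exists (`|M| + 1) => //; apply: AM.
by rewrite (le_lt_trans (ler_norm M)) // ltrDl.
Qed.

Lemma is_lebesgue_cube (R : realType) (d : nat) (mu : {measure set (Rd R d) -> \bar R}) s :
  is_lebesgue mu -> 0 <= s -> mu (box 0 (const_mx s)) = (s ^+ d)%:E.
Proof.
move=> mu_box s_ge0; rewrite mu_box => [|i]; last by rewrite !mxE.
by under eq_bigr do rewrite !mxE subr0; rewrite prodr_const card_ord.
Qed.

Section cap_step_bounded.
Variables (R : realType) (d : nat) (mu : {measure set (Rd R d) -> \bar R}).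
Variables (g : 'rV[R]_d -> R) (gt : R -> R) (alpha L r : R) (A : set 'rV[R]_d).
Hypothesis d_gt0 : (0 < d)%N.
Hypothesis mu_box : is_lebesgue mu.
Hypothesis alpha_gt0 : 0 < alpha.
Hypothesis mA : @measurable _ (Rd R d) A.
Hypothesis muA : mu A = alpha%:E.
Hypothesis r_ge0 : 0 <= r.
Hypothesis A_r : forall y, A y -> `|y| <= r.
Hypothesis g01 : forall x, 0 <= g x <= 1.
Hypothesis g0 : g 0 = 1.
Hypothesis g_radial : forall x, g x = gt (eucl_norm x).
Hypothesis gt_derive : forall t, 0 < t -> derivable gt t 1 /\ derive1 gt t < 0.
Hypothesis L_ge0 : 0 <= L.
Hypothesis g_lip : forall x y, `|g x - g y| <= L * eucl_norm (x - y).

Let profile_ge0 := radial_profile_ge0 d_gt0 g01 g_radial.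
Let profile_le := radial_profile_le d_gt0 g01 g0 g_radial gt_derive.

Let alpha1r_gt0 : 0 < alpha + 1 + r.
Proof. by rewrite ltr_wpDr // addr_gt0. Qed.

Lemma cap_C_ge_profile : gt (d%:R * (alpha + 1 + r)) * alpha <= cap_C mu g alpha A.
Proof.
apply: (cap_C_ge mA muA g01 L_ge0 g_lip (Q := box 0 (const_mx (alpha + 1)))) => //.
- by apply: sub_sigma_algebra; do 2 eexists.
- rewrite is_lebesgue_cube ?lee_fin //; last by rewrite addr_ge0 // ltW.
  have alpha1_ge1 : 1 <= alpha + 1 by rewrite lerDr ltW.
  by rewrite (le_trans _ (ler_eXnr d_gt0 alpha1_ge1)) // lerDl.
move=> x Qx; apply: (cap_f_ge_cst mA muA L_ge0 g_lip) => [|y Ay].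
  by apply: profile_ge0; rewrite mulr_ge0 // ltW.
rewrite g_radial profile_le ?eucl_norm_ge0 //.
apply: eucl_norm_le_coord_bound => [|i]; first exact: ltW.
rewrite !mxE (le_trans (ler_normB _ _)) // lerD //.
  by have := Qx i; rewrite !mxE => /andP[? ?]; rewrite ger0_norm // ltW.
exact: le_trans (coord_le_mx_norm y i) (A_r Ay).
Qed.

Lemma cap_f_far x (rho : R) : 0 <= rho -> d%:R * (rho + 1 + r) <= eucl_norm x ->
  (cap_f mu g A x <= (gt (rho + 1) * alpha)%:E)%E.
Proof.
move=> rho_ge0 x_far.
apply: (cap_f_le_cst mA muA g01 L_ge0 g_lip) => [|y Ay]; first by apply: profile_ge0; lra.
rewrite g_radial profile_le //; first lra.
apply: le_trans (mx_norm_le_eucl_norm _).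
have : rho + 1 + r <= `|x|.
  by rewrite -(@ler_pM2l _ d%:R) ?ltr0n // (le_trans x_far) // eucl_norm_le_mx_norm.
by have := lerB_dist x y; have := A_r Ay; lra.
Qed.

Lemma cap_next_sub_eball :
  cap_next mu g alpha A `<=` eball0 (d%:R * (d%:R * (alpha + 1 + r) + 1 + r)).
Proof.
set rho := d%:R * (alpha + 1 + r).
have rho_gt0 : 0 < rho by rewrite mulr_gt0 ?ltr0n.
move=> x A1x; rewrite /eball0 /= ltNge; apply/negP => /(cap_f_far (ltW rho_gt0)) f_far.
have gt_lt : gt (rho + 1) < gt rho.
  by rewrite (ltr0_derive1_lt_oy gt_derive) ?in_itv /= ?andbT ?ltrDl // ltr_wpDr.
have : ((gt rho * alpha)%:E <= (gt (rho + 1) * alpha)%:E)%E.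
  by apply: le_trans f_far; apply: le_trans A1x; rewrite lee_fin cap_C_ge_profile.
by rewrite lee_fin ler_pM2r // leNgt gt_lt.
Qed.

End cap_step_bounded.

Theorem lemma7 (R : realType) (d : nat)
    (mu : {measure set (Rd R d) -> \bar R}) (g : 'rV[R]_d -> R)
    (alpha : R) (A0 : set 'rV[R]_d) :
  is_lebesgue mu ->
  kernel_assumptions g ->
  0 < alpha ->
  compact A0 ->
  mu A0 = alpha%:E ->
  exists Rad : R, 0 < Rad /\ cap_next mu g alpha A0 `<=` eball0 Rad.
Proof.
move=> mu_box [g01 [[gt [g_radial gt_derive]] [g0 [_ [[L [L_ge0 g_lip]] _]]]]].
move=> alpha_gt0 A0_compact muA0.
have [d0|d_gt0] := posnP d.
  by subst d; exists 1; split => // x _; rewrite /eball0 /= /eucl_norm big_ord0 sqrtr0.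
have mA0 : @measurable _ (Rd R d) A0.
  by apply: closed_measurable_rV; exact: compact_closed.
have [r r_ge0 A0_r] := compact_norm_bounded A0_compact.
eexists; split; last first.
  exact: (cap_next_sub_eball d_gt0 mu_box alpha_gt0 mA0 muA0 r_ge0 A0_r
            g01 g0 g_radial gt_derive L_ge0 g_lip).
have d_pos : 0 < d%:R :> R by rewrite ltr0n.
have rho_gt0 : 0 < d%:R * (alpha + 1 + r) by rewrite mulr_gt0 //; lra.
by rewrite mulr_gt0 //; lra.
Qed.
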